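(* Let $S$ and $T$ be maps (each with finitely many points of period dividing $n$ for every $n\ge1$) such that the Cartesian product $S\times T$ satisfies $\mathcal O_{S\times T}(n)=1$ for all $n\ge1$. Then there is a set $P$ of primes such that $\mathcal O_T=s_P$ and $\mathcal O_S=s_{P^c}$, where $P^c$ is the set of primes not in $P$.
   Context: For a map $T:X\to X$, $\mathcal O_T(n)$ denotes the number of closed orbits of length $n$ under $T$ (sets $\{x,Tx,\dots,T^{n-1}x\}$ with $T^nx=x$ of cardinality exactly $n$). For a set $P$ of primes, $s_P$ is the sequence with $s_P(n)=0$ if $p\mid n$ for some $p\in P$, and $s_P(n)=1$ otherwise. *)

From HB Require Import structures.
From mathcomp Require Import all_boot.
From mathcomp Require Import finmap.
From mathcomp Require Import boolp classical_sets cardinality.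
Set Implicit Arguments. Unset Strict Implicit. Unset Printing Implicit Defensive.
Local Open Scope classical_set_scope.
Local Open Scope fset_scope.
Local Open Scope card_scope.

Definition closed_orbits (X : Type) (T : X -> X) (n : nat) : set (set X) :=
  [set A | exists x : X, iter n T x = x /\
            A = [set iter k T x | k in [set k : nat | (k < n)%N]] /\
            A #= [set k : nat | (k < n)%N]].

(* O_T(n): the number of closed orbits of length n (the cardinality of the
   finite set closed_orbits T n; fset_set gives 0 on infinite sets, which
   never arises under the finiteness hypotheses of the theorem). *)
Definition O (X : Type) (T : X -> X) (n : nat) : nat :=
  #|` fset_set (closed_orbits T n) |.

Definition per_points (X : Type) (T : X -> X) (n : nat) : set X :=
  [set x | iter n T x = x].

Definition prod_map (X Y : Type) (S : X -> X) (T : Y -> Y) : X * Y -> X * Y :=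
  fun z => (S z.1, T z.2).

Definition s_ (P : set nat) (n : nat) : nat :=
  if `[< exists p, P p /\ (p %| n)%N >] then 0 else 1.

Definition primes_compl (P : set nat) : set nat :=
  [set p | prime p /\ ~ P p].

(* The exact period of (x, y) under S x T is lcm(a, b), where a and b are the
   exact periods of x and y.  Since S x T has exactly one cycle of each length,
   (x, y) and (x, T y) lie on a common cycle, which forces a and b to be
   coprime; and since it has a cycle of every length, every n factors as a b
   with a an S-period and b a T-period.  Hence every prime is a period of
   exactly one of S and T; with P the primes that are S-periods, n is a
   T-period iff no prime of P divides n, and an S-period iff no other prime
   does.  Pairing with a fixed point of the other map shows that S and T, like
   S x T, have at most one cycle of each length. *)

From mathcomp Require Import all_boot.
From mathcomp Require Import finmap.
From mathcomp Require Import boolp classical_sets cardinality.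
Local Open Scope classical_set_scope.
Set Implicit Arguments.

Section Iterates.
Variables (X : Type) (f : X -> X).

Definition exact_period (x : X) (n : nat) :=
  (0 < n)%N /\ forall k, iter k f x = x <-> (n %| k)%N.

Definition has_period (n : nat) := exists x, exact_period x n.

Definition cycle_of (x : X) (n : nat) : set X := [set iter k f x | k in `I_n].

Definition single_cycle (n : nat) :=
  has_period n /\ forall x x', exact_period x n -> exact_period x' n ->
    exists k, x' = iter k f x.

Lemma iter_mod x n k : iter n f x = x -> iter k f x = iter (k %% n) f x.
Proof.
by move=> fix_x; rewrite {1}(divn_eq k n) addnC iterD iterM (iter_fix _ fix_x).
Qed.

Lemma exact_period_min x n :
  (0 < n)%N -> iter n f x = x ->
  (forall k, (0 < k)%N -> (k < n)%N -> iter k f x <> x) -> exact_period x n.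
Proof.
move=> n0 fix_x min_n; split=> // k; split=> [fix_k | /dvdnP[q ->]].
- apply/eqP; case E: (k %% n) => [//|r]; exfalso.
  apply: (min_n r.+1) => //; first by rewrite -E ltn_pmod.
  by rewrite -E -iter_mod.
- by rewrite iterM iter_fix.
Qed.

Lemma exact_period_exists x m :
  (0 < m)%N -> iter m f x = x -> exists n, exact_period x n.
Proof.
move=> m0 fix_m.
have ex_per : exists k, `[< (0 < k)%N /\ iter k f x = x >].
  by exists m; apply/asboolP.
case: (ex_minnP ex_per) => n /asboolP [n0 fix_n] min_n.
exists n; apply: exact_period_min => // k k0 kn fix_k.
by move: kn; rewrite ltnNge min_n //; apply/asboolP.
Qed.

Lemma exact_period_uniq x n m : exact_period x n -> exact_period x m -> n = m.
Proof.
move=> [_ per_n] [_ per_m]; apply/eqP; rewrite eqn_dvd.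
by apply/andP; split; [apply/per_n/per_m | apply/per_m/per_n].
Qed.

Lemma iter_back x n j :
  exact_period x n -> iter (n - j %% n) f (iter j f x) = x.
Proof.
move=> [n0 per_n]; rewrite -iterD; apply/per_n.
by rewrite /dvdn -modnDmr subnK ?modnn // ltnW // ltn_pmod.
Qed.

Lemma eq_iter_mod x n i j :
  exact_period x n -> iter i f x = iter j f x <-> i = j %[mod n].
Proof.
move=> px; have [n0 per_n] := px; have fix_n : iter n f x = x by apply/per_n.
split=> [eq_ij | eq_ij]; last by rewrite (iter_mod n i fix_n) eq_ij -(iter_mod n j fix_n).
have back_i : iter (n - j %% n + i) f x = x by rewrite iterD eq_ij iter_back.
have back_j : iter (n - j %% n + j) f x = x by rewrite iterD iter_back.
apply/eqP; rewrite -(eqn_modDl (n - j %% n)).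
by move: back_i back_j => /per_n /eqP -> /per_n /eqP ->.
Qed.

Lemma exact_period_iter x n j : exact_period x n -> exact_period (iter j f x) n.
Proof.
move=> px; split=> [|k]; first by case: px.
rewrite -iterD (eq_iter_mod _ _ px) /dvdn -[in X in _ = X %[mod n]](add0n j).
by rewrite (rwP eqP) eqn_modDr mod0n.
Qed.

Lemma cycle_of_iter_sub x n m j :
  (0 < n)%N -> iter n f x = x -> cycle_of (iter j f x) m `<=` cycle_of x n.
Proof.
move=> n0 fix_x _ [i _ <-]; exists ((i + j) %% n); first by rewrite /= ltn_pmod.
by rewrite -iterD -iter_mod.
Qed.

Lemma cycle_of_iter x n j :
  exact_period x n -> cycle_of (iter j f x) n = cycle_of x n.
Proof.
move=> px; have [n0 per_n] := px.
have fix_x : iter n f x = x by apply/per_n.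
have fix_jx : iter n f (iter j f x) = iter j f x by apply/((exact_period_iter j px).2 n).
apply/seteqP; split; first exact: cycle_of_iter_sub.
by rewrite -{1}(iter_back j px); apply: cycle_of_iter_sub.
Qed.

Lemma closed_orbitsP n A :
  (0 < n)%N ->
  closed_orbits f n A <-> exists x, exact_period x n /\ A = cycle_of x n.
Proof.
move=> n0; split=> [[x [fix_x [defA cardA]]] | [x [px ->]]].
  exists x; split=> //; apply: exact_period_min => // k k0 kn fix_k.
  (* a period k < n would leave A with at most k points *)
  have Ak : A = cycle_of x k.
    rewrite defA; apply/seteqP; split; first exact: (@cycle_of_iter_sub x k n 0 k0 fix_k).
    by move=> _ [i /= ik <-]; exists i => //=; apply: ltn_trans kn.
  have nA : (`I_n #<= A)%card by move: cardA; rewrite card_eq_le => /andP[].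
  have Ak' : (A #<= `I_k)%card by rewrite Ak; apply: card_image_le.
  by move: (card_le_trans nA Ak'); rewrite card_le_II leqNgt kn.
exists x; split; first by apply/(proj2 px).
split=> //; apply: inj_card_eq => i j /set_mem /= ilt /set_mem /= jlt.
by move/(eq_iter_mod _ _ px); rewrite !modn_small.
Qed.

Lemma O_eq0 n : (0 < n)%N -> ~ has_period n -> O f n = 0%N.
Proof.
move=> n0 no_per; rewrite /O (_ : closed_orbits f n = set0) ?fset_set0 //.
apply/predeqP => A; split=> // /(closed_orbitsP _ _ n0) [x [px _]].
by apply: no_per; exists x.
Qed.

Lemma O_eq1 n : (0 < n)%N -> O f n = 1%N <-> single_cycle n.
Proof.
move=> n0; split=> [|[[x px] same]].
  rewrite /O; have [fin|infin] := pselect (finite_set (closed_orbits f n)); last first.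
    by rewrite /fset_set; case: pselect.
  move=> /eqP /cardfs1P [A defA].
  have orbitsE : closed_orbits f n = [set A] by rewrite -(fset_setK fin) defA set_fset1.
  have cycleA y : exact_period y n -> cycle_of y n = A.
    move=> py; have : closed_orbits f n (cycle_of y n).
      by apply/(closed_orbitsP _ _ n0); exists y.
    by rewrite orbitsE.
  have [y [py _]] : exists y, exact_period y n /\ A = cycle_of y n.
    by apply/(closed_orbitsP _ _ n0); rewrite orbitsE.
  split=> [|y1 y2 py1 py2]; first by exists y.
  have : cycle_of y1 n y2 by rewrite (cycleA _ py1) -(cycleA _ py2); exists 0%N.
  by move=> [k _ <-]; exists k.
rewrite /O (_ : closed_orbits f n = [set cycle_of x n]) ?fset_set1 ?cardfs1 //.
apply/predeqP => A; split=> [/(closed_orbitsP _ _ n0) [y [py ->]] | ->].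
  by have [k ->] := same _ _ px py; rewrite /= cycle_of_iter.
by apply/(closed_orbitsP _ _ n0); exists x.
Qed.

Lemma O_eq_s (P : set nat) n :
  (0 < n)%N -> (has_period n -> single_cycle n) ->
  (has_period n <-> ~ exists p, P p /\ (p %| n)%N) -> O f n = s_ P n.
Proof.
move=> n0 cycle_n per_n; rewrite /s_; case: asboolP => [divP | no_divP].
  by apply: O_eq0 => // /per_n.
by apply/(O_eq1 _ n0)/cycle_n/per_n.
Qed.

End Iterates.

Lemma iter_prod_map (X Y : Type) (S : X -> X) (T : Y -> Y) k x y :
  iter k (prod_map S T) (x, y) = (iter k S x, iter k T y).
Proof. by elim: k => [|k IHk] //=; rewrite IHk. Qed.

Lemma exact_period_prod_map (X Y : Type) (S : X -> X) (T : Y -> Y) x y n :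
  exact_period (prod_map S T) (x, y) n <->
  exists a b, exact_period S x a /\ exact_period T y b /\ n = lcmn a b.
Proof.
have lcm_period a b : exact_period S x a -> exact_period T y b ->
    exact_period (prod_map S T) (x, y) (lcmn a b).
  move=> [a0 per_a] [b0 per_b]; split=> [|k]; first by rewrite lcmn_gt0 a0 b0.
  rewrite iter_prod_map dvdn_lcm; split=> [[/per_a -> /per_b ->] // | /andP[]].
  by move=> /per_a -> /per_b ->.
split=> [pxy | [a [b [pa [pb ->]]]]]; last exact: lcm_period.
have [n0 per_n] := pxy.
have [Sn Tn] : iter n S x = x /\ iter n T y = y.
  by have := (per_n n).2 (dvdnn n); rewrite iter_prod_map => -[-> ->].
have [a pa] := exact_period_exists _ _ n0 Sn.
have [b pb] := exact_period_exists _ _ n0 Tn.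
by exists a, b; do 2!split=> //; apply: exact_period_uniq pxy (lcm_period _ _ pa pb).
Qed.

Section CoprimeFactorization.
Variables A B : set nat.
Hypothesis factorAB :
  forall {n}, (0 < n)%N -> exists a b, A a /\ B b /\ n = (a * b)%N.
Hypothesis coprimeAB : forall {a b}, A a -> B b -> coprime a b.

Lemma prime_factor_dichotomy p : prime p -> B p <-> ~ A p.
Proof.
move=> p_pr; split=> [Bp Ap | nAp].
  by move: (coprimeAB Ap Bp); rewrite (prime_coprime _ p_pr) dvdnn.
have [a [b [Aa [Bb p_ab]]]] := factorAB (prime_gt0 p_pr).
have /(primeP p_pr).2 /orP[/eqP a1 | /eqP ap] : (a %| p)%N by rewrite p_ab dvdn_mulr.
  by rewrite p_ab a1 mul1n.
by rewrite -ap in nAp.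
Qed.

Lemma factor_prime_dvd p b : B b -> prime p -> (p %| b)%N -> B p.
Proof.
move=> Bb p_pr p_b; apply/(prime_factor_dichotomy _ p_pr) => Ap.
by move: (coprimeAB Ap Bb); rewrite (prime_coprime _ p_pr) p_b.
Qed.

Lemma factor_set_char n :
  (0 < n)%N -> A n <-> ~ exists p, (prime p /\ B p) /\ (p %| n)%N.
Proof.
move=> n0; split=> [An [p [[p_pr Bp] p_n]] | no_B].
  by move: (coprimeAB An Bp); rewrite coprime_sym (prime_coprime _ p_pr) p_n.
have [a [b [Aa [Bb n_ab]]]] := factorAB n0.
have b0 : (0 < b)%N by move: n0; rewrite n_ab muln_gt0 => /andP[].
have [b_gt1 | b_le1] := ltnP 1 b; last first.
  by rewrite n_ab (_ : b = 1%N) ?muln1 //; apply/eqP; rewrite eqn_leq b_le1.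
have q_pr := pdiv_prime b_gt1; have q_b := pdiv_dvd b.
exfalso; apply: no_B; exists (pdiv b); split; last by rewrite n_ab dvdn_mull.
by split; last exact: factor_prime_dvd Bb q_pr q_b.
Qed.

End CoprimeFactorization.

Section UniqueProductCycles.
Variables (X Y : Type) (S : X -> X) (T : Y -> Y).
Hypothesis cycleST : forall n, (0 < n)%N -> single_cycle (prod_map S T) n.

(* (x, y) and (x, T y) have the same exact period, so the second is an
   iterate (iter k) of the first: then a divides k while k = 1 mod b. *)
Lemma period_coprime a b : has_period S a -> has_period T b -> coprime a b.
Proof.
move=> [x pa] [y pb]; have pb' := exact_period_iter 1 pb.
have [pxy pxy'] : exact_period (prod_map S T) (x, y) (lcmn a b) /\
                  exact_period (prod_map S T) (x, T y) (lcmn a b).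
  by split; apply/exact_period_prod_map; exists a, b.
have [_ same] := cycleST _ (proj1 pxy).
have [k] := same _ _ pxy pxy'; rewrite iter_prod_map => -[Sk Tk].
have a_k : (a %| k)%N by apply/(proj2 pa).
have k_mod : 1 = k %[mod b] by apply/(eq_iter_mod _ _ pb).
by rewrite (coprime_dvdl a_k) // -coprime_modl -k_mod coprime_modl coprime1n.
Qed.

Lemma period_factorization n :
  (0 < n)%N -> exists a b, has_period S a /\ has_period T b /\ n = (a * b)%N.
Proof.
move=> n0; have [[[x y] pxy] _] := cycleST _ n0.
have [a [b [pa [pb ->]]]] := (exact_period_prod_map _ _ _ _ _).1 pxy.
have Sa : has_period S a by exists x.
have Tb : has_period T b by exists y.
exists a, b; split=> //; split=> //.
by rewrite -muln_lcm_gcd (eqP (period_coprime Sa Tb)) muln1.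
Qed.

Lemma has_period1 : has_period S 1 /\ has_period T 1.
Proof.
have [a [b [Sa [Tb /esym/eqP]]]] := period_factorization 1 isT.
by rewrite muln_eq1 => /andP[/eqP a1 /eqP b1]; rewrite -{1}a1 -b1.
Qed.

Lemma single_cycle_l n : (0 < n)%N -> has_period S n -> single_cycle S n.
Proof.
move=> n0 Sn; split=> // x x' px px'; have [_ [y py]] := has_period1.
have pxy : forall z, exact_period S z n -> exact_period (prod_map S T) (z, y) n.
  by move=> z pz; apply/exact_period_prod_map; exists n, 1%N; rewrite lcmn1.
have [k] := (cycleST _ n0).2 _ _ (pxy _ px) (pxy _ px').
by rewrite iter_prod_map => -[-> _]; exists k.
Qed.

Lemma single_cycle_r n : (0 < n)%N -> has_period T n -> single_cycle T n.
Proof.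
move=> n0 Tn; split=> // y y' py py'; have [[x px] _] := has_period1.
have pxy : forall z, exact_period T z n -> exact_period (prod_map S T) (x, z) n.
  by move=> z pz; apply/exact_period_prod_map; exists 1%N, n; rewrite lcm1n.
have [k] := (cycleST _ n0).2 _ _ (pxy _ py) (pxy _ py').
by rewrite iter_prod_map => -[_ ->]; exists k.
Qed.

End UniqueProductCycles.

Theorem proposition3p1 (X Y : Type) (S : X -> X) (T : Y -> Y)
  (finS : forall n : nat, (0 < n)%N -> finite_set (per_points S n))
  (finT : forall n : nat, (0 < n)%N -> finite_set (per_points T n))
  (hST : forall n : nat, (0 < n)%N -> O (prod_map S T) n = 1%N) :
  exists P : set nat, (forall p, P p -> prime p) /\
    forall n : nat, (0 < n)%N ->
      O T n = s_ P n /\ O S n = s_ (primes_compl P) n.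
Proof.
have cycleST n (n0 : (0 < n)%N) : single_cycle (prod_map S T) n.
  exact/(O_eq1 _ _ n0)/hST.
have factorST := period_factorization cycleST.
have coprimeST := period_coprime cycleST.
have factorTS n (n0 : (0 < n)%N) :
    exists b a, has_period T b /\ has_period S a /\ n = (b * a)%N.
  by have [a [b [Sa [Tb ->]]]] := factorST n n0; exists b, a; rewrite mulnC.
have coprimeTS b a : has_period T b -> has_period S a -> coprime b a.
  by move=> Tb Sa; rewrite coprime_sym coprimeST.
pose P := [set p | prime p /\ has_period S p].
have complP : primes_compl P = [set p | prime p /\ has_period T p].
  apply/predeqP => p; split=> [[p_pr nPp] | [p_pr Tp]]; split=> //.
    by apply/(prime_factor_dichotomy _ _ factorST coprimeST _ p_pr) => Sp; apply: nPp.
  by move=> [_]; apply/(prime_factor_dichotomy _ _ factorST coprimeST _ p_pr).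
exists P; split=> [p [] // | n n0]; split; apply: O_eq_s => //.
- exact: (single_cycle_r cycleST n0).
- exact: factor_set_char _ _ factorTS coprimeTS _ n0.
- exact: (single_cycle_l cycleST n0).
- by rewrite complP; exact: factor_set_char _ _ factorST coprimeST _ n0.
Qed.
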